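(* Let $(\mathcal H,X)$ be a stable arrangement of $n$ hyperplanes in $\mathbb R^d$, $\mathcal C=\mathrm{code}(\mathcal H,X)$, and let $F\in\Gamma(\mathcal C)$ be a face with $|F|<n$ such that the region $R_F$ is nonempty. Then $(\{H_i^+\cap R_F\}_{i\notin\underline F},R_F)$ is a stable arrangement. Moreover, the nerve of $\{H_i^+\cap R_F,\ H_i^-\cap R_F\}_{i\in[n]\setminus\underline F}$ (vertex $i$ for $H_i^+\cap R_F$, vertex $\bar i$ for $H_i^-\cap R_F$) is either collapsible or equal to $\Gamma(2^{[n]\setminus\underline F})$.
   Context: An oriented affine hyperplane is $H_i=\{x:w_i\cdot x-h_i=0\}$ with $w_i\neq0$, $H_i^+=\{w_i\cdot x-h_i>0\}$, $H_i^-=\{w_i\cdot x-h_i<0\}$. For hyperplanes $\{H_i\}_{i\in I}$ and open convex $Y$, the atom of $\sigma\subseteq I$ is $\bigl(\bigcap_{i\in\sigma}(H_i^+\cap Y)\bigr)\setminus\bigcup_{j\in I\setminus\sigma}H_j^+$ (for $\sigma=\emptyset$: $Y\setminus\bigcup_iH_i^+$), the code is the set of $\sigma$ with nonempty atom, and the arrangement is stable if $Y$ is open convex and for every $\sigma\subseteq I$ with $Y\cap\bigcap_{i\in\sigma}H_i\neq\emptyset$, $\dim\bigcap_{i\in\sigma}H_i=d-|\sigma|$. The polar complex $\Gamma(\mathcal C)$ is the simplicial complex on $[n]\sqcup\{\bar1,\dots,\bar n\}$ of all subsets of $\Sigma(\sigma)=\sigma\sqcup\{\bar i:i\notin\sigma\}$,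 $\sigma\in\mathcal C$. A face $F$ is written $F=F^+\sqcup\{\bar j:j\in F^-\}$ with $F^\pm\subseteq[n]$; its support is $\underline F=F^+\cup F^-$, and $R_F=X\cap\bigcap_{i\in F^+}H_i^+\cap\bigcap_{j\in F^-}H_j^-$. For $S\subseteq[n]$, $\Gamma(2^S)$ is the complex on $S\sqcup\{\bar i:i\in S\}$ whose faces are the subsets containing no pair $\{i,\bar i\}$. The nerve of $\{V_v\}_{v\in V}$ is $\{S\subseteq V:\bigcap_{v\in S}V_v\ne\emptyset\}$. A free pair in a complex $\Delta$ is $(\sigma,\tau)$ with $\tau$ a facet, $\sigma\subsetneq\tau$, $\sigma$ in no other facet; collapsing along $\sigma$ gives $\{\nu\in\Delta:\nu\not\supseteq\sigma\}$; $\Delta$ is collapsible if finitely many collapses yield the void complex $\{\}$. *)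

From HB Require Import structures.
From mathcomp Require Import all_boot all_order all_algebra.
From mathcomp Require Import all_classical all_reals all_analysis.
Set Implicit Arguments. Unset Strict Implicit. Unset Printing Implicit Defensive.
Import Order.TTheory GRing.Theory Num.Theory.
Import numFieldNormedType.Exports.
Local Open Scope classical_set_scope.
Local Open Scope ring_scope.

Section Arrangements.
Variables (R : realType) (d n : nat).
Implicit Types (w : 'I_n -> 'rV[R]_d) (h : 'I_n -> R) (Y A : set 'rV[R]_d).

Definition dotv (u v : 'rV[R]_d) : R := \sum_(j < d) u 0 j * v 0 j.

Definition hyp w h (i : 'I_n) : set 'rV[R]_d := [set x | dotv (w i) x - h i = 0].
Definition hpos w h (i : 'I_n) : set 'rV[R]_d := [set x | dotv (w i) x - h i > 0].
Definition hneg w h (i : 'I_n) : set 'rV[R]_d := [set x | dotv (w i) x - h i < 0].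

Definition convex_set_rV Y : Prop :=
  forall x y, Y x -> Y y -> forall t : R, 0 <= t -> t <= 1 ->
    Y ((1 - t) *: x + t *: y).

(* affine dimension of a nonempty set A: dimension of its affine hull,
   i.e. the least dimension of a linear subspace V with A contained in a + V *)
Definition affine_dim A (k : nat) : Prop :=
  (exists x, A x) /\
  (exists (a : 'rV[R]_d) (V : {vspace 'rV[R]_d}),
      \dim V = k /\ forall x, A x -> x - a \in V) /\
  (forall (a : 'rV[R]_d) (V : {vspace 'rV[R]_d}),
      (forall x, A x -> x - a \in V) -> (k <= \dim V)%N).

Definition hypint w h (sigma : {set 'I_n}) : set 'rV[R]_d :=
  [set x | forall i, i \in sigma -> hyp w h i x].

(* stability of the arrangement ({H_i}_{i in I}, Y):
   Y open convex, and for every sigma ⊆ I whose hyperplanes meet in Y,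
   dim (⋂_{i in sigma} H_i) = d - |sigma| (as integers). *)
Definition stable (I : {set 'I_n}) w h Y : Prop :=
  open Y /\ convex_set_rV Y /\
  forall sigma : {set 'I_n}, sigma \subset I ->
    (exists x, Y x /\ hypint w h sigma x) ->
    exists k : nat, affine_dim (hypint w h sigma) k /\ (k + #|sigma| = d)%N.

Definition atom w h Y (sigma : {set 'I_n}) : set 'rV[R]_d :=
  [set x | Y x /\ (forall i, i \in sigma -> hpos w h i x)
                /\ (forall j, j \notin sigma -> ~ hpos w h j x)].

Definition in_code w h Y (sigma : {set 'I_n}) : Prop :=
  exists x, atom w h Y sigma x.

(* vertices: inl i = i, inr i = \bar i *)
Definition Sigma (sigma : {set 'I_n}) : {set 'I_n + 'I_n} :=
  [set inl i | i in sigma] :|: [set inr i | i in ~: sigma].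

Definition in_polar w h Y (F : {set 'I_n + 'I_n}) : Prop :=
  exists sigma, in_code w h Y sigma /\ F \subset Sigma sigma.

Definition Fplus (F : {set 'I_n + 'I_n}) : {set 'I_n} := [set i | inl i \in F].
Definition Fminus (F : {set 'I_n + 'I_n}) : {set 'I_n} := [set i | inr i \in F].
Definition fsupport (F : {set 'I_n + 'I_n}) : {set 'I_n} := Fplus F :|: Fminus F.

Definition region w h X (F : {set 'I_n + 'I_n}) : set 'rV[R]_d :=
  [set x | X x /\ (forall i, i \in Fplus F -> hpos w h i x)
              /\ (forall j, j \in Fminus F -> hneg w h j x)].

Definition polar_verts (S : {set 'I_n}) : {set 'I_n + 'I_n} :=
  [set inl i | i in S] :|: [set inr i | i in S].

Definition Gamma_full (S : {set 'I_n}) (T : {set 'I_n + 'I_n}) : Prop :=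
  T \subset polar_verts S /\ forall i, ~ (inl i \in T /\ inr i \in T).

End Arrangements.

Section Complexes.
Variable V : finType.
Definition complex := {set V} -> Prop.

Definition nerve {P : Type} (Vs : {set V}) (U : V -> set P) : complex :=
  fun S => S \subset Vs /\ exists x, forall v, v \in S -> U v x.

Definition facet (D : complex) (tau : {set V}) : Prop :=
  D tau /\ forall nu, D nu -> tau \subset nu -> nu = tau.

Definition free_pair (D : complex) (sigma tau : {set V}) : Prop :=
  facet D tau /\ sigma \proper tau /\
  forall tau', facet D tau' -> sigma \subset tau' -> tau' = tau.

Definition collapse (D : complex) (sigma : {set V}) : complex :=
  fun nu => D nu /\ ~ (sigma \subset nu).

Definition void (D : complex) : Prop := forall nu, ~ D nu.

Inductive collapsible : complex -> Prop :=
| collapsible_void D : void D -> collapsible D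
| collapsible_step D sigma tau :
    free_pair D sigma tau -> collapsible (collapse D sigma) -> collapsible D.
End Complexes.

(* R_F is open and convex, so restricting the arrangement to it keeps it stable.
   Write K(Y, S) ([side_complex Y S]) for the complex of sign patterns on the
   hyperplanes H_i, i in S, realised by points of Y. If these hyperplanes meet
   in Y, stability makes their normals linearly independent, so every sign
   pattern is realised near a common point and K(Y, S) = Γ(2^S). Otherwise pick
   m in S: K(Y, S) is K(Y, S \ m) with the cones from m and m̄ over
   K(Y ∩ H_m^+, S \ m) and K(Y ∩ H_m^-, S \ m) attached. By convexity at most
   one of Y ∩ H_m^± meets the remaining hyperplanes, so by induction on |S| each
   cone is either attached along a collapsible subcomplex or is a full cone over
   K(Y, S \ m); either way the result collapses. *)
From HB Require Import structures.
From mathcomp Require Import all_boot all_order all_algebra.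
From mathcomp Require Import all_classical all_reals all_analysis.
From mathcomp Require Import zify ring lra.
Set Implicit Arguments.
Unset Strict Implicit.
Unset Printing Implicit Defensive.
Import Order.TTheory GRing.Theory Num.Theory.
Import numFieldNormedType.Exports.
Local Open Scope classical_set_scope.
Local Notation subsetP := fintype.subsetP.
Local Notation subset_trans := fintype.subset_trans.
Local Notation properxx := fintype.properxx.
Local Notation setD1K := finset.setD1K.
Local Notation setUS := finset.setUS.
Local Notation properEneq := finset.properEneq.

Section Collapsibility.
Variable V : finType.
Implicit Types (A B X : complex V) (s t nu sigma tau : {set V}) (v : V).

Lemma complex_ext A B : (forall s, A s <-> B s) -> A = B.
Proof. by move=> AB; apply: funext => s; apply: propext. Qed.

(* X ∪ v * B; for B a subcomplex of X not involving v, X with the cone over B attached. *)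
Definition cone_union v X B : complex V :=
  fun s => X s \/ (v \in s /\ B (s :\ v)).

Lemma cone_unionC v1 v2 X B1 B2 :
  cone_union v2 (cone_union v1 X B1) B2 = cone_union v1 (cone_union v2 X B2) B1.
Proof. by apply: complex_ext => s; rewrite /cone_union; tauto. Qed.

Lemma exists_facet A s : A s -> exists2 tau, facet A tau & s \subset tau.
Proof.
move=> As; have Ps : `[< A s >] && (s \subset s) by rewrite subxx andbT; exact/asboolP.
case: (@arg_maxnP _ s (fun tau => `[< A tau >] && (s \subset tau)) (fun tau => #|tau|) Ps)
  => tau /andP[/asboolP Atau s_tau] tau_max.
exists tau => //; split=> // nu Anu tau_nu; apply/eqP; rewrite eq_sym eqEcard tau_nu.
by apply: tau_max; rewrite (subset_trans s_tau tau_nu) andbT; exact/asboolP.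
Qed.

Lemma subsetD1_setU1 v s t : v \notin s -> v |: s \subset t -> s \subset t :\ v.
Proof. by move=> vs /(subset_trans (subsetU1 v s)) st; rewrite subsetD1 st. Qed.

Section ConeUnion.
Variables (v : V) (X B : complex V).
Hypotheses (sub_BX : forall s, B s -> X s) (notin_X : forall s, X s -> v \notin s).
Let K := cone_union v X B.

Lemma cone_union_link s : K s -> v \in s -> B (s :\ v).
Proof. by case=> [/notin_X/negP | []]. Qed.

Lemma cone_union_cone s : B s -> K (v |: s).
Proof. by move=> Bs; right; rewrite setU11 setU1K //; apply/notin_X/sub_BX. Qed.

Lemma facet_cone_union tau : facet B tau -> facet K (v |: tau).
Proof.
move=> [Btau tau_max]; split; first exact: cone_union_cone.
move=> nu Knu tau_nu; have vnu : v \in nu by apply: (subsetP tau_nu); rewrite setU11.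
suff <- : nu :\ v = tau by rewrite setD1K.
by apply: tau_max (cone_union_link Knu vnu) (subsetD1_setU1 _ tau_nu); apply/notin_X/sub_BX.
Qed.

Lemma facet_link t : facet K t -> v \in t -> facet B (t :\ v).
Proof.
move=> [Kt t_max] vt; split; first exact: cone_union_link.
move=> nu Bnu t_nu; have vnu := notin_X (sub_BX Bnu).
suff tE : v |: nu = t by rewrite -tE setU1K.
by apply: t_max; [exact: cone_union_cone | rewrite -(setD1K vt) setUS].
Qed.

Lemma free_pair_cone_union sigma tau :
  free_pair B sigma tau -> free_pair K (v |: sigma) (v |: tau).
Proof.
move=> [ftau [sigma_tau sigma_uniq]].
have vtau : v \notin tau by case: ftau => /sub_BX/notin_X.
have vsigma : v \notin sigma by apply: contra vtau; apply/subsetP/proper_sub.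
split; first exact: facet_cone_union.
split.
  rewrite properEneq setUS ?proper_sub // andbT.
  apply: contraTneq sigma_tau => E.
  by rewrite -(setU1K vsigma) E setU1K // properxx.
move=> t ft sigma_t; have vt : v \in t by apply: (subsetP sigma_t); rewrite setU11.
suff <- : t :\ v = tau by rewrite setD1K.
exact: sigma_uniq (facet_link ft vt) (subsetD1_setU1 vsigma sigma_t).
Qed.

Lemma collapse_cone_union sigma : v \notin sigma ->
  collapse K (v |: sigma) = cone_union v X (collapse B sigma).
Proof.
move=> vsigma; apply: complex_ext => s; split.
- case=> -[Xs | [vs Bs]] not_sub; first by left.
  by right; split=> //; split=> // sigma_s; apply: not_sub; rewrite -(setD1K vs) setUS.
- case=> [Xs | [vs [Bs not_sub]]].
    split; first by left.
    by move/subsetP/(_ v (setU11 _ _)); apply/negP/notin_X.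
  split; first by right.
  by move/(subsetD1_setU1 vsigma).
Qed.

End ConeUnion.

Lemma collapsible_cone_union v X B :
  (forall s, B s -> X s) -> (forall s, X s -> v \notin s) ->
  collapsible B -> collapsible X -> collapsible (cone_union v X B).
Proof.
move=> + Xv cB cX; elim: cB => {B} [B voidB | B sigma tau fp _ IH] BX.
  suff -> : cone_union v X B = X by [].
  by apply: complex_ext => s; split=> [[// | [_ /voidB]] | Xs]; last left.
have vsigma : v \notin sigma.
  case: fp => [[/BX/Xv vtau _] [sigma_tau _]].
  by apply: contra vtau; apply/subsetP/proper_sub.
apply: collapsible_step (free_pair_cone_union BX Xv fp) _.
by rewrite collapse_cone_union //; apply: IH => s [/BX].
Qed.

Definition delete_face A tau : complex V := fun s => A s /\ s <> tau.

Lemma collapse_cone_facet v A tau : (forall s, A s -> v \notin s) -> facet A tau ->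
  collapse (cone_union v A A) tau = cone_union v (delete_face A tau) (delete_face A tau).
Proof.
move=> Av [Atau tau_max]; have vtau := Av _ Atau.
apply: complex_ext => s; split.
- case=> -[As | [vs As]] not_sub.
    by left; split=> // stau; apply: not_sub; rewrite stau.
  right; split=> //; split=> // stau; apply: not_sub.
  by rewrite -(setD1K vs) stau subsetU1.
- case=> [[As ntau] | [vs [As ntau]]].
    by split; [left | move/(tau_max _ As)/ntau].
  split; first by right.
  by move=> tau_s; apply: ntau; apply: tau_max As _; rewrite subsetD1 tau_s vtau.
Qed.

Lemma collapsible_cone v A : (forall s, A s -> v \notin s) -> collapsible (cone_union v A A).
Proof.
have [N] := ubnP #|[pred s | `[< A s >]]|; elim: N A => // N IH A ltAN Av.
have [[s0 As0] | noA] := pselect (exists s, A s); last first.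
  by apply: collapsible_void => s [As | [_ As]]; apply: noA; eexists; exact: As.
have [tau ftau _] := exists_facet As0; have [Atau tau_max] := ftau.
have vtau := Av _ Atau; have idA : forall s, A s -> A s by [].
have tau_ne : tau != v |: tau by apply: contraNneq vtau => ->; rewrite setU11.
apply: (collapsible_step (sigma := tau) (tau := v |: tau)).
  split; first exact: (facet_cone_union idA Av ftau).
  split; first by rewrite properEneq tau_ne subsetU1.
  move=> t ft tau_t; have [vt | vt] := boolP (v \in t).
    suff <- : t :\ v = tau by rewrite setD1K.
    by apply: tau_max; [case: (facet_link idA Av ft vt) | rewrite subsetD1 tau_t vtau].
  case: ft => -[At | [vt' _]] t_max; last by rewrite vt' in vt.
  have tE := tau_max _ At tau_t; rewrite tE in t_max.
  by move: tau_ne; rewrite (t_max _ (cone_union_cone idA Av Atau)) ?eqxx // subsetU1.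
rewrite collapse_cone_facet //; apply: IH => [|s [/Av]//].
suff lt_faces : #|[pred s | `[< delete_face A tau s >]]| < #|[pred s | `[< A s >]]|.
  by apply: leq_trans lt_faces _; rewrite -ltnS.
rewrite [X in _ < X](cardD1 tau) [tau \in _]inE asboolT //= ltnS.
apply/subset_leq_card/subsetP => s; rewrite !inE => -[As ntau].
by rewrite asboolT // andbT; exact/eqP.
Qed.

Lemma collapsible_two_cones v1 v2 X B1 B2 : v1 != v2 ->
  (forall s, B1 s -> X s) -> (forall s, B2 s -> X s) ->
  (forall s, X s -> v1 \notin s) -> (forall s, X s -> v2 \notin s) ->
  B1 = X \/ (collapsible B1 /\ collapsible X) -> collapsible B2 ->
  collapsible (cone_union v2 (cone_union v1 X B1) B2).
Proof.
move=> v12 B1X B2X Xv1 Xv2 cB1 cB2.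
apply: collapsible_cone_union cB2 _ => [s /B2X | s [/Xv2 // | [v1s /B1X/Xv2]] |]; first by left.
  by apply: contra; rewrite in_setD1 eq_sym v12.
case: cB1 => [-> | [cB1 cX]]; first exact: collapsible_cone.
exact: collapsible_cone_union.
Qed.

End Collapsibility.

Local Open Scope ring_scope.

Section HalfSpaces.
Variables (R : realType) (d : nat).
Implicit Types (a x y p v : 'rV[R]_d) (b t : R) (Y : set 'rV[R]_d).

Lemma dotvD a x y : dotv a (x + y) = dotv a x + dotv a y.
Proof. by rewrite /dotv -big_split; apply: eq_bigr => j _; rewrite mxE mulrDr. Qed.

Lemma dotvZ a t x : dotv a (t *: x) = t * dotv a x.
Proof. by rewrite /dotv mulr_sumr; apply: eq_bigr => j _; rewrite mxE mulrCA. Qed.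

Lemma dotv_convex_comb a b t x y :
  dotv a ((1 - t) *: x + t *: y) - b = (1 - t) * (dotv a x - b) + t * (dotv a y - b).
Proof. by rewrite dotvD !dotvZ; ring. Qed.

Lemma dotv_shift a b t x v : dotv a (x + t *: v) - b = (dotv a x - b) + t * dotv a v.
Proof. by rewrite dotvD dotvZ; ring. Qed.

Lemma dotv_continuous a : continuous (dotv a).
Proof.
apply: continuous_big => [|j _]; first exact: add_continuous.
by move=> x; apply: continuousM; [exact: cst_continuous | exact: coord_continuous].
Qed.

Lemma convex_comb_gt0 (u v t : R) : 0 < u -> 0 < v -> 0 <= t <= 1 ->
  0 < (1 - t) * u + t * v.
Proof. move=> u0 v0 /andP[t0 t1]; nra. Qed.

Lemma convexI Y1 Y2 : convex_set_rV Y1 -> convex_set_rV Y2 -> convex_set_rV (Y1 `&` Y2).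
Proof. by move=> c1 c2 x y [? ?] [? ?] t t0 t1; split; [exact: c1 | exact: c2]. Qed.

Lemma open_ray Y p v : open Y -> Y p -> exists2 t, 0 < t & Y (p + t *: v).
Proof.
move=> oY Yp.
have ray_cont : continuous (fun t : R => p + t *: v).
  by move=> t; apply: cvgD; [exact: cvg_cst | exact: scalel_continuous].
have Yray : \forall t \near 0, Y (p + t *: v).
  by apply: ray_cont; rewrite scale0r addr0; exact: open_nbhs_nbhs.
near (0 : R)^'+ => t; exists t; near: t; first exact: nbhs_right_gt.
exact: cvg_within Yray.
Unshelve. all: by end_near.
Qed.

End HalfSpaces.

Section Arrangement.
Variables (R : realType) (d n : nat) (w : 'I_n -> 'rV[R]_d) (h : 'I_n -> R).
Implicit Types (S : {set 'I_n}) (T : {set 'I_n + 'I_n}) (Y : set 'rV[R]_d)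
  (u v : 'I_n + 'I_n) (x y p : 'rV[R]_d).

Definition unbar v : 'I_n := match v with inl i | inr i => i end.

Definition side v : set 'rV[R]_d :=
  match v with inl i => hpos w h i | inr i => hneg w h i end.

Lemma mem_polar_verts S v : (v \in polar_verts S) = (unbar v \in S).
Proof.
have imset_inr_inl A i : (inl i \in inr @: A) = false.
  by apply/imsetP => -[].
have imset_inl_inr A i : (inr i \in inl @: A) = false.
  by apply/imsetP => -[].
case: v => i; rewrite inE ?imset_inr_inl ?imset_inl_inr ?orbF /= mem_imset //.
  exact: inl_inj.
exact: inr_inj.
Qed.

Lemma side_disjoint u v x : side u x -> side v x -> unbar u = unbar v -> u = v.
Proof.
case: u v => i [] j /= ux vx ij; subst j => //;
  by have := lt_trans ux vx; rewrite ltxx.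
Qed.

Lemma open_side v : open (side v).
Proof.
have open_dotv_preimage (P : set R) i : open P -> open (dotv (w i) @^-1` P).
  by move=> oP; apply: open_comp oP => x _; exact: dotv_continuous.
case: v => i /=.
  suff -> : hpos w h i = dotv (w i) @^-1` [set y | h i < y].
    exact/open_dotv_preimage/open_gt.
  by apply/seteqP; split=> x; rewrite /hpos /= subr_gt0.
suff -> : hneg w h i = dotv (w i) @^-1` [set y | y < h i].
  exact/open_dotv_preimage/open_lt.
by apply/seteqP; split=> x; rewrite /hneg /= subr_lt0.
Qed.

Lemma convex_side v : convex_set_rV (side v).
Proof.
case: v => i x y /= xi yi t t0 t1; rewrite /hpos /hneg /= dotv_convex_comb.
  by apply: convex_comb_gt0; rewrite ?t0.
rewrite -oppr_gt0 opprD -!mulrN.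
by apply: convex_comb_gt0; rewrite ?oppr_gt0 ?t0.
Qed.

(* Unlike [nerve], the empty face needs a point of Y: for Y empty this is the void
   complex, which is collapsible, whereas {∅} is not. *)
Definition side_complex Y S : complex ('I_n + 'I_n)%type :=
  fun T => T \subset polar_verts S /\ exists2 x, Y x & forall v, v \in T -> side v x.

Definition hyps_meet Y S : Prop := exists2 x, Y x & hypint w h S x.

Lemma side_complex_sub Y1 Y2 S1 S2 T : Y1 `<=` Y2 -> S1 \subset S2 ->
  side_complex Y1 S1 T -> side_complex Y2 S2 T.
Proof.
move=> sY /subsetP sS [/subsetP TS [x Yx Tx]]; split; last by exists x => //; exact: sY.
by apply/subsetP => v /TS; rewrite !mem_polar_verts => /sS.
Qed.

Lemma side_complex_Gamma Y S T : side_complex Y S T -> Gamma_full S T.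
Proof. by case=> TS [x _ Tx]; split=> // i [/Tx il /Tx ir]; have := side_disjoint il ir erefl. Qed.

Lemma side_complex_link Y S v T : unbar v \in S -> v \in T ->
  side_complex Y S T <-> side_complex (Y `&` side v) (S :\ unbar v) (T :\ v).
Proof.
move=> vS vT; split.
- case=> /subsetP TS [x Yx Tx]; split; last first.
    by exists x; [split; [|exact: Tx] | move=> u /setD1P[_ /Tx]].
  apply/subsetP => u /setD1P[uv uT].
  rewrite mem_polar_verts in_setD1 -mem_polar_verts TS // andbT.
  by apply: contra uv => /eqP same_idx; apply/eqP/(side_disjoint (Tx _ uT) (Tx _ vT)).
- case=> /subsetP TS [x [Yx vx] Tx]; split; last first.
    by exists x => // u uT; have [-> // | uv] := eqVneq u v; apply: Tx; rewrite in_setD1 uv.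
  apply/subsetP => u uT; have [-> | uv] := eqVneq u v; first by rewrite mem_polar_verts.
  have /TS : u \in T :\ v by rewrite in_setD1 uv.
  by rewrite !mem_polar_verts in_setD1 => /andP[].
Qed.

Lemma side_complex_avoid Y S m T : (forall v, v \in T -> unbar v != m) ->
  side_complex Y S T -> side_complex Y (S :\ m) T.
Proof.
move=> Tm [/subsetP TS Tx]; split=> //; apply/subsetP => v vT.
by move: (TS v vT); rewrite !mem_polar_verts in_setD1 Tm.
Qed.

Lemma side_complex_decomp Y S m : m \in S ->
  side_complex Y S =
  cone_union (inr m)
    (cone_union (inl m) (side_complex Y (S :\ m)) (side_complex (Y `&` side (inl m)) (S :\ m)))
    (side_complex (Y `&` side (inr m)) (S :\ m)).
Proof.
move=> mS; apply: complex_ext => T; rewrite /cone_union; split=> [KT | ].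
  have [lT | lT] := boolP (inl m \in T).
    by left; right; split=> //; apply/(@side_complex_link Y S (inl m) T mS lT).
  have [rT | rT] := boolP (inr m \in T).
    by right; split=> //; apply/(@side_complex_link Y S (inr m) T mS rT).
  left; left; apply: side_complex_avoid KT => -[] i iT /=; apply/eqP => im;
    by move: iT; rewrite im ?(negbTE lT) ?(negbTE rT).
case=> [[KT | [lT KT]] | [rT KT]].
- exact: side_complex_sub (subD1set S m) KT.
- exact/(@side_complex_link Y S (inl m) T mS lT).
- exact/(@side_complex_link Y S (inr m) T mS rT).
Qed.

(* The kernel of z |-> (w_i . z)_(i in S) lies in the direction space of the
   intersection of the H_i, of dimension k = d - |S|; by rank-nullity the map is onto. *)
Lemma exists_dotv_values S p k (s : 'I_n -> R) :
  hypint w h S p -> affine_dim (hypint w h S) k -> (k + #|S| = d)%N ->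
  exists z, forall i, i \in S -> dotv (w i) z = s i.
Proof.
move=> Sp [_ [[a [V [dimV HV]]] _]] kS.
pose M : 'M[R]_(d, #|S|) := \matrix_(j, l) w (enum_val l) 0 j.
pose f : 'Hom('rV[R]_d, 'rV[R]_#|S|) := linfun (mulmxr M).
have fE z l : f z 0 l = dotv (w (enum_val l)) z.
  by rewrite lfunE /= mxE /dotv; apply: eq_bigr => j _; rewrite mxE mulrC.
have ker_sub : (lker f <= V)%VS.
  apply/subvP => z; rewrite memv_ker => /eqP fz0.
  have Spz : hypint w h S (p + z).
    move=> i iS; rewrite /hyp /= dotvD.
    have := fE z (enum_rank_in iS i); rewrite fz0 mxE enum_rankK_in // => <-.
    by rewrite addr0; exact: Sp.
  have := memvB (HV _ Spz) (HV _ Sp).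
  by rewrite opprB addrA subrK addrC addKr.
have img_full : limg f = fullv.
  apply/eqP; rewrite eqEdim subvf dimvf dim_matrix mul1r.
  have := limg_ker_dim f fullv; rewrite capfv dimvf dim_matrix mul1r.
  by have := dimvS ker_sub; rewrite dimV; lia.
have /memv_imgP[z _ fz] : (\row_l s (enum_val l) : 'rV_#|S|) \in limg f.
  by rewrite img_full memvf.
exists z => i iS; have := congr1 (fun r : 'rV_#|S| => r 0 (enum_rank_in iS i)) fz.
by rewrite /= fE !mxE enum_rankK_in.
Qed.

Lemma side_complex_full Y S : stable S w h Y -> hyps_meet Y S ->
  side_complex Y S = Gamma_full S.
Proof.
move=> [oY [_ stY]] [p Yp Sp].
have [k [dimS kS]] := stY S (subxx S) (ex_intro _ p (conj Yp Sp)).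
apply: complex_ext => T; split; first exact: side_complex_Gamma.
move=> [TS no_pair].
pose s i : R := if inl i \in T then 1 else -1.
have [z zS] := exists_dotv_values s Sp dimS kS.
have [t t0 Ypt] := open_ray z oY Yp.
split=> //; exists (p + t *: z) => // v vT.
have vS : unbar v \in S by rewrite -mem_polar_verts (subsetP TS).
case: v vT vS => i iT iS /=.
  by rewrite /hpos /= dotv_shift Sp // zS // /s iT add0r mulr1.
have liT : inl i \notin T by apply/negP => liT; apply: (no_pair i).
by rewrite /hneg /= dotv_shift Sp // zS // /s (negbTE liT) add0r mulrN1 oppr_lt0.
Qed.

Lemma hyps_meet_segment Y S m x y : convex_set_rV Y -> Y x -> Y y ->
  hypint w h (S :\ m) x -> hypint w h (S :\ m) y ->
  hpos w h m x -> hneg w h m y -> hyps_meet Y S.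
Proof.
move=> cY Yx Yy Sx Sy; rewrite /hpos /hneg /=.
set a := dotv (w m) x - h m; set b := dotv (w m) y - h m => a0 b0.
have ab0 : 0 < a - b by lra.
(* the affine form of H_m, equal to a at x and b at y, vanishes at parameter t *)
pose t := a / (a - b).
have t0 : 0 <= t by rewrite divr_ge0 ?ltW.
have t1 : t <= 1 by rewrite ler_pdivrMr // mul1r; lra.
exists ((1 - t) *: x + t *: y); first exact: cY.
move=> i iS; rewrite /hyp /= dotv_convex_comb.
have [-> | im] := eqVneq i m.
  by rewrite -/a -/b /t; field; rewrite gt_eqF.
have iSm : i \in S :\ m by rewrite in_setD1 im.
by rewrite (Sx _ iSm) (Sy _ iSm) !mulr0 addr0.
Qed.

Lemma hyps_meet_opposite Y S u v : convex_set_rV Y -> unbar v = unbar u -> u != v ->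
  hyps_meet (Y `&` side u) (S :\ unbar u) -> hyps_meet (Y `&` side v) (S :\ unbar u) ->
  hyps_meet Y S.
Proof.
move=> cY; case: u v => i [] j /= ji; rewrite ji ?eqxx // => _ [x [Yx xi] Sx] [y [Yy yi] Sy].
  exact: hyps_meet_segment xi yi.
exact: hyps_meet_segment yi xi.
Qed.

Lemma stable_sub S1 S2 Y1 Y2 : open Y1 -> convex_set_rV Y1 -> Y1 `<=` Y2 ->
  S1 \subset S2 -> stable S2 w h Y2 -> stable S1 w h Y1.
Proof.
move=> oY1 cY1 sY sS [_ [_ st2]]; split=> //; split=> // sigma sigmaS [x [Yx Sx]].
by apply: st2; [exact: subset_trans sigmaS sS | exists x; split=> //; exact: sY].
Qed.

Lemma stable_side S Y v : stable S w h Y -> stable S w h (Y `&` side v).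
Proof.
move=> stY; have [oY [cY _]] := stY; apply: stable_sub stY => //.
  by apply: openI => //; exact: open_side.
by apply: convexI => //; exact: convex_side.
Qed.

Lemma side_complex_notin Y S v T : side_complex Y (S :\ unbar v) T -> v \notin T.
Proof. by case=> /subsetP TS _; apply/negP => /TS; rewrite mem_polar_verts setD11. Qed.

Lemma hyps_meet_split Y S m : hyps_meet Y (S :\ m) ->
  [\/ hyps_meet Y S, hyps_meet (Y `&` side (inl m)) (S :\ m)
     | hyps_meet (Y `&` side (inr m)) (S :\ m)].
Proof.
case=> x Yx Sx; case: (ltgtP (dotv (w m) x - h m) 0) => xm.
- by apply: Or33; exists x.
- by apply: Or32; exists x.
- apply: Or31; exists x => // i iS; have [-> // | im] := eqVneq i m.
  by apply: Sx; rewrite in_setD1 im.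
Qed.

Lemma collapsible_side_complex S Y : stable S w h Y -> ~ hyps_meet Y S ->
  collapsible (side_complex Y S).
Proof.
have [N] := ubnP #|S|; elim: N S Y => // N IH S Y ltSN stY no_meet.
have [S0 | [m mS]] := set_0Vmem S.
  apply: collapsible_void => T [_ [x Yx _]]; apply: no_meet; exists x => // i.
  by rewrite S0 inE.
set S' := S :\ m.
have {}IH Y' : stable S' w h Y' -> ~ hyps_meet Y' S' -> collapsible (side_complex Y' S').
  by apply: IH; move: ltSN; rewrite (cardsD1 m S) mS.
have [oY [cY _]] := stY.
have stY' : stable S' w h Y by apply: stable_sub stY => //; exact: subD1set.
have sub_Y v T : side_complex (Y `&` side v) S' T -> side_complex Y S' T.
  by apply: side_complex_sub => // ? [].
have notin_Y v T : unbar v = m -> side_complex Y S' T -> v \notin T.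
  by move=> vm; rewrite /S' -vm; exact: side_complex_notin.
have one_side u v : unbar u = m -> unbar v = m -> u != v -> hyps_meet (Y `&` side u) S' ->
    collapsible (cone_union v (cone_union u (side_complex Y S')
      (side_complex (Y `&` side u) S')) (side_complex (Y `&` side v) S')).
  move=> um vm uv meet_u.
  refine (collapsible_two_cones uv (@sub_Y u) (@sub_Y v) (notin_Y u ^~ um) (notin_Y v ^~ vm) _ _).
    have meet_Y : hyps_meet Y S' by case: meet_u => x [Yx _] Sx; exists x.
    by left; rewrite (side_complex_full (stable_side u stY') meet_u) side_complex_full.
  apply: IH (stable_side v stY') _ => meet_v; apply: no_meet.
  by apply: hyps_meet_opposite cY _ uv _ _; rewrite ?um ?vm.
rewrite (side_complex_decomp Y mS).
have [meet_l | no_l] := pselect (hyps_meet (Y `&` side (inl m)) S').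
  exact: one_side.
have [meet_r | no_r] := pselect (hyps_meet (Y `&` side (inr m)) S').
  by rewrite cone_unionC; exact: one_side.
have no_meet' : ~ hyps_meet Y S' by case/hyps_meet_split.
refine (collapsible_two_cones _ (@sub_Y _) (@sub_Y _)
  (notin_Y (inl m) ^~ erefl) (notin_Y (inr m) ^~ erefl) _ _) => //.
- by right; split; apply: IH => //; exact: stable_side.
- by apply: IH => //; exact: stable_side.
Qed.

Definition sides_cap T : set 'rV[R]_d := [set x | forall v, v \in T -> side v x].

Lemma regionE X T : region w h X T = X `&` sides_cap T.
Proof.
apply/seteqP; split=> x [Xx Tx]; split=> //.
  by case: Tx => Tp Tn [] i iT; [apply: Tp | apply: Tn]; rewrite inE.
by split=> i; rewrite inE => /Tx.
Qed.

Lemma open_sides_cap T : open (sides_cap T).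
Proof.
rewrite openE => x Tx; suff : \forall y \near x, forall v, v \in T -> side v y by [].
apply: (@filter_forall _ _ (fun v y => v \in T -> side v y) _ (nbhs_filter x)) => v.
have [vT | vT] := boolP (v \in T).
  have vx : nbhs x (side v) by apply: open_nbhs_nbhs; split; [exact: open_side | exact: Tx].
  by apply: filterS vx => y yv _.
by apply: filterE => y /negP.
Qed.

Lemma convex_sides_cap T : convex_set_rV (sides_cap T).
Proof. by move=> x y Tx Ty t t0 t1 v vT; apply: convex_side => //; [exact: Tx | exact: Ty]. Qed.

Lemma nerve_sides Y S : (exists x, Y x) ->
  nerve (polar_verts S) (fun v => side v `&` Y) = side_complex Y S.
Proof.
move=> [x0 Yx0]; apply: complex_ext => T; split.
  case=> TS [x Tx]; split=> //; have [T0 | [v vT]] := set_0Vmem T.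
    by exists x0 => // v; rewrite T0 inE.
  by exists x; [case: (Tx v vT) | move=> u /Tx[]].
by case=> TS [x Yx Tx]; split=> //; exists x => v /Tx.
Qed.

End Arrangement.

Theorem proposition3p7 (R : realType) (d n : nat)
  (w : 'I_n -> 'rV[R]_d) (h : 'I_n -> R) (X : set 'rV[R]_d)
  (F : {set 'I_n + 'I_n}) :
  (forall i, w i != 0) ->
  stable [set: 'I_n] w h X ->
  in_polar w h X F ->
  (#|F| < n)%N ->
  (exists x, region w h X F x) ->
  stable (~: fsupport F) w h (region w h X F) /\
  (let S := ~: fsupport F in
   let U := fun v : 'I_n + 'I_n =>
     match v with
     | inl i => hpos w h i `&` region w h X F
     | inr i => hneg w h i `&` region w h X F
     end in
   collapsible (nerve (polar_verts S) U) \/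
   (forall T, nerve (polar_verts S) U T <-> Gamma_full S T)).
Proof.
move=> _ stX _ _ RF_ne; have [oX [cX _]] := stX.
have stRF : stable (~: fsupport F) w h (region w h X F).
  apply: (stable_sub _ _ _ (finset.subsetT _) stX); rewrite regionE.
  - by apply: openI => //; exact: open_sides_cap.
  - by apply: convexI => //; exact: convex_sides_cap.
  - by move=> x [].
split=> // S U.
have -> : U = fun v => side w h v `&` region w h X F by apply: funext => -[].
rewrite nerve_sides //.
have [meet | no_meet] := pselect (hyps_meet w h (region w h X F) S).
  by right=> T; rewrite side_complex_full.
by left; exact: collapsible_side_complex.
Qed.
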